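(* Let $\mathbf i=(I,\varepsilon,d)$ be a feed, $k\in I$, and $\mathbf i'=(I,\varepsilon',d)$ its mutation in direction $k$. Equip the torus $\mathcal D_{\mathbf i}$ with coordinates $(B_i,X_i)_{i\in I}$ and the Poisson structure $$\{B_i,B_j\}=0,\quad \{X_i,B_j\}=d_i^{-1}\delta_{ij}X_iB_j,\quad \{X_i,X_j\}=\widehat\varepsilon_{ij}X_iX_j,$$ and the torus $\mathcal D_{\mathbf i'}$ with coordinates $(B'_i,X'_i)$ and the same structure with $\widehat\varepsilon'_{ij}=\varepsilon'_{ij}d_j^{-1}$; equip the torus $\mathcal X_{\mathbf i}$ with coordinates $X_i$ and bracket $\{X_i,X_j\}=\widehat\varepsilon_{ij}X_iX_j$, and $\mathcal X_{\mathbf i'}$ likewise with $\widehat\varepsilon'$. Let $\mu'_k:\mathcal D_{\mathbf i}\to\mathcal D_{\mathbf i'}$ be the isomorphism given by $$(\mu'_k)^*B'_i=B_i\ (i\ne k),\quad (\mu'_k)^*B'_k=\mathbb B_k^-/B_k,\quad (\mu'_k)^*X'_k=X_k^{-1},\quad (\mu'_k)^*X'_i=X_iX_k^{[\varepsilon_{ik}]_+}\ (i\neq k),$$ and $\mu'_k:\mathcal X_{\mathbf i}\to\mathcal X_{\mathbf i'}$ the isomorphism given by the last two formulas. Then both maps $\mu'_k$ are Poisson maps.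
   Context: A feed $\mathbf i=(I,\varepsilon,d)$: $I$ a finite set, $\varepsilon=(\varepsilon_{ij})_{i,j\in I}$ an integer matrix, $d=(d_i)$ positive integers such that $\widehat\varepsilon_{ij}:=\varepsilon_{ij}d_j^{-1}$ is skew-symmetric. Its mutation in direction $k$ is $\mathbf i'=(I,\varepsilon',d)$ with $\varepsilon'_{ij}=-\varepsilon_{ij}$ if $i=k$ or $j=k$; $\varepsilon'_{ij}=\varepsilon_{ij}$ if $\varepsilon_{ik}\varepsilon_{kj}\le0$; $\varepsilon'_{ij}=\varepsilon_{ij}+|\varepsilon_{ik}|\varepsilon_{kj}$ if $\varepsilon_{ik}\varepsilon_{kj}>0$. Notation: $[\alpha]_+=\max(\alpha,0)$, $\mathbb B_k^-:=\prod_{j:\varepsilon_{kj}<0}B_j^{-\varepsilon_{kj}}$, $\delta_{ij}$ the Kronecker delta. All tori are split algebraic tori $\mathbb G_m^{I}$ (resp. $\mathbb G_m^{2|I|}$). *)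

From HB Require Import structures.
From mathcomp Require Import all_boot all_order all_algebra.
From mathcomp.multinomials Require Import freeg.

Set Implicit Arguments.
Unset Strict Implicit.
Unset Printing Implicit Defensive.

Import Order.TTheory GRing.Theory Num.Theory.
Local Open Scope ring_scope.

(* Coordinate ring of the split torus G_m^J over R:                   *)
(* Laurent polynomials R[x_j^{+-1} : j in J] = group algebra of Z^J,  *)
Definition expo (J : finType) := {ffun J -> int}.
Definition Laurent (R : nzRingType) (J : finType) := {freeg (expo J) / R}.

Definition mono (R : nzRingType) (J : finType) (a : expo J) : Laurent R J := << a >>.

Definition coordf (R : nzRingType) (J : finType) (j : J) : Laurent R J :=
  mono R [ffun i => ((i == j) : nat)%:Z].

Definition lmul (R : nzRingType) (J : finType) (f g : Laurent R J) : Laurent R J :=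
  fglift (fun a : expo J => fglift (fun b : expo J => mono R (a + b)) g) f.

(* Euler derivation x_j d/dx_j *)
Definition euler (R : nzRingType) (J : finType) (j : J) (f : Laurent R J) : Laurent R J :=
  fglift (fun a : expo J => (a j)%:~R *: mono R a) f.

(* The (log-canonical) Poisson bracket with {x_i, x_j} = Om i j x_i x_j:
   {f, g} = sum_{i,j} Om i j x_i x_j (d_i f) (d_j g)
          = sum_{i,j} Om i j (x_i d_i f) (x_j d_j g). *)
Definition pbracket (R : nzRingType) (J : finType) (Om : J -> J -> R)
    (f g : Laurent R J) : Laurent R J :=
  \sum_(i : J) \sum_(j : J) Om i j *: lmul (euler i f) (euler j g).

(* Pullback along the monomial morphism of tori phi : G_m^J -> G_m^J'
   with phi^* y_j' = x^(P j'): the algebra map y^c |-> x^(sum_j' c_j' P j'). *)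
Definition pullback (R : nzRingType) (J J' : finType) (P : J' -> expo J)
    (f : Laurent R J') : Laurent R J :=
  fglift (fun c : expo J' => mono R (\sum_(j : J') (P j) *~ (c j))) f.

Definition is_poisson_map (R : nzRingType) (J J' : finType)
    (Om : J -> J -> R) (Om' : J' -> J' -> R) (P : J' -> expo J) : Prop :=
  forall f g : Laurent R J',
    pullback P (pbracket Om' f g) = pbracket Om (pullback P f) (pullback P g).

Definition epshat (R : numFieldType) (I : finType) (eps : I -> I -> int)
    (d : I -> nat) (i j : I) : R :=
  (eps i j)%:~R / (d j)%:R.

Definition is_feed (R : numFieldType) (I : finType) (eps : I -> I -> int)
    (d : I -> nat) : Prop :=
  (forall i, (0 < d i)%N) /\
  (forall i j, epshat R eps d i j = - epshat R eps d j i).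

Definition mutate (I : finType) (eps : I -> I -> int) (k : I) (i j : I) : int :=
  if (i == k) || (j == k) then - eps i j
  else if 0 < eps i k * eps k j then eps i j + `|eps i k| * eps k j
  else eps i j.

Definition pos_part (a : int) : int := Num.max a 0.

(* The torus D_i : coordinates indexed by I + I, inl i = B_i, inr i = X_i.
   {B_i,B_j} = 0, {X_i,B_j} = d_i^{-1} delta_ij X_i B_j
   (hence {B_j,X_i} = - d_i^{-1} delta_ij B_j X_i by skew-symmetry),
   {X_i,X_j} = epshat_ij X_i X_j. *)
Definition OmD (R : numFieldType) (I : finType) (eps : I -> I -> int)
    (d : I -> nat) (u v : (I + I)%type) : R :=
  match u, v with
  | inl _, inl _ => 0
  | inr i, inl j => if i == j then (d i)%:R^-1 else 0
  | inl j, inr i => if i == j then - (d i)%:R^-1 else 0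
  | inr i, inr j => epshat R eps d i j
  end.

Definition OmX (R : numFieldType) (I : finType) (eps : I -> I -> int)
    (d : I -> nat) (i j : I) : R :=
  epshat R eps d i j.

Definition evec (J : finType) (j : J) : expo J := [ffun i => ((i == j) : nat)%:Z].

(* mu'_k on D_i: exponent vectors of (mu'_k)^* B'_i, (mu'_k)^* X'_i. *)
Definition muD (I : finType) (eps : I -> I -> int) (k : I) (u : (I + I)%type) : expo (I + I)%type :=
  match u with
  | inl i =>
      if i == k then
        (* BB_k^- / B_k  with  BB_k^- = prod_{j : eps_kj < 0} B_j^{-eps_kj} *)
        [ffun z => match z with
                   | inl j => (if eps k j < 0 then - eps k j else 0) - ((j == k) : nat)%:Z
                   | inr _ => 0
                   end]
      else evec (inl i)
  | inr i =>
      if i == k then - evec (inr k)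
      else evec (inr i) + evec (inr k) *~ pos_part (eps i k)
  end.

Definition muX (I : finType) (eps : I -> I -> int) (k : I) (i : I) : expo I :=
  if i == k then - evec k
  else evec i + evec k *~ pos_part (eps i k).

From HB Require Import structures.
From mathcomp Require Import all_boot all_order all_algebra.
From mathcomp.multinomials Require Import freeg.
From mathcomp Require Import ring zify.

Set Implicit Arguments.
Unset Strict Implicit.
Unset Printing Implicit Defensive.

Import Order.TTheory GRing.Theory Num.Theory.
Local Open Scope ring_scope.

(* A monomial map P between tori with log-canonical brackets
   {x_u, x_v} = Om u v x_u x_v is Poisson as soon as Om' = P Om P^T on the exponent
   lattices: {x^a, x^b} = <a, Om b> x^(a+b), the pullback sends x^c to x^(P^T c), and
   both sides of the Poisson identity are bilinear, so monomials suffice.  For mu'_k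
   the congruence is checked entry by entry.  Away from row and column k it is the
   mutation rule eps'_ij = eps_ij + [eps_ik]_+ eps_kj + eps_ik [-eps_kj]_+ together
   with [eps_ij]_+ / d_j = [-eps_ji]_+ / d_i, which holds because epshat is
   skew-symmetric and the d_i are positive. *)

Section FreegLift.
Variables (R : nzRingType) (K : choiceType) (M : lmodType R) (F : K -> M).

HB.instance Definition _ :=
  GRing.isZmodMorphism.Build {freeg K / R} M (fglift F) (lift_is_additive F).

Lemma scale_freegU (c k : R) (x : K) :
  c *: << k *g x >> = << (c * k) *g x >> :> {freeg K / R}.
Proof. by apply/eqP/freeg_eqP => y; rewrite coeffZ !coeffU mulrA. Qed.

Lemma fglift_scalable : scalable (fglift F).
Proof.
move=> c D; rewrite -[D]freeg_sumE scaler_sumr !(raddf_sum (fglift F)) scaler_sumr.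
by apply: eq_bigr => z _ /=; rewrite scale_freegU !liftU scalerA.
Qed.

HB.instance Definition _ :=
  GRing.isScalable.Build R {freeg K / R} M *:%R (fglift F) fglift_scalable.

Lemma fglift_linear : linear (fglift F).
Proof. exact: linearP. Qed.

Lemma fglift1 (x : K) : fglift F << x >> = F x.
Proof. by rewrite liftU scale1r. Qed.

Lemma fgliftE (D : {freeg K / R}) :
  fglift F D = \sum_(z <- dom D) coeff z D *: F z.
Proof.
rewrite -{1}[D]freeg_sumE raddf_sum.
by apply: eq_bigr => z _ /=; rewrite liftU.
Qed.

End FreegLift.

Section Laurent.
Variables (R : comNzRingType) (J : finType).
Implicit Types (a b : expo J) (f g : Laurent R J).

Lemma Laurent_linear_ext (M : lmodType R) (phi psi : Laurent R J -> M) :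
  linear phi -> linear psi -> (forall a, phi (mono R a) = psi (mono R a)) ->
  phi =1 psi.
Proof.
have linear0 (chi : Laurent R J -> M) : linear chi -> chi 0 = 0.
  move=> Lchi; rewrite -(scale0r (0 : Laurent R J)) (scalable_linear Lchi) /=.
  exact: scale0r.
move=> Lphi Lpsi Emono; elim/freeg_ind_dom0 => [|c a D _ _ IH].
  by rewrite !linear0.
by rewrite -[c]mulr1 -scale_freegU Lphi Lpsi Emono IH.
Qed.

Lemma Laurent_bilinear_ext (M : lmodType R)
    (phi psi : Laurent R J -> Laurent R J -> M) :
  (forall g, linear (phi ^~ g)) -> (forall f, linear (phi f)) ->
  (forall g, linear (psi ^~ g)) -> (forall f, linear (psi f)) ->
  (forall a b, phi (mono R a) (mono R b) = psi (mono R a) (mono R b)) ->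
  forall f g, phi f g = psi f g.
Proof.
move=> Lphil Lphir Lpsil Lpsir Emono f g.
apply: (Laurent_linear_ext (Lphil g) (Lpsil g)) => a.
exact: Laurent_linear_ext.
Qed.

Lemma euler_linear (j : J) : linear (@euler R J j).
Proof. exact: fglift_linear. Qed.

Lemma lmul_linearl g : linear (fun f => lmul f g).
Proof. exact: fglift_linear. Qed.

Lemma lmul_linearr f : linear (lmul f).
Proof.
move=> c g h; rewrite /lmul !fgliftE scaler_sumr -big_split.
apply: eq_bigr => a _ /=.
by rewrite fglift_linear scalerDr !scalerA mulrC.
Qed.

Lemma euler_mono (j : J) a : euler j (mono R a) = (a j)%:~R *: mono R a.
Proof. exact: fglift1. Qed.

Lemma lmul_mono a b : lmul (mono R a) (mono R b) = mono R (a + b).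
Proof. by rewrite /lmul /mono !fglift1. Qed.

End Laurent.

Section ExponentPairing.
Variable R : comNzRingType.

Definition expo_pair (J : finType) (a : expo J) (F : J -> R) : R :=
  \sum_j (a j)%:~R * F j.

Definition expo_form (J : finType) (Om : J -> J -> R) (a b : expo J) : R :=
  expo_pair a (fun i => expo_pair b (Om i)).

Definition expo_pull (J J' : finType) (P : J' -> expo J) (c : expo J') : expo J :=
  \sum_j P j *~ c j.

Lemma eq_expo_pair (J : finType) (a : expo J) (F G : J -> R) :
  F =1 G -> expo_pair a F = expo_pair a G.
Proof. by move=> EFG; apply: eq_bigr => j _; rewrite EFG. Qed.

Lemma expo_pairD (J : finType) (a b : expo J) (F : J -> R) :
  expo_pair (a + b) F = expo_pair a F + expo_pair b F.
Proof. by rewrite -big_split; apply: eq_bigr => j _; rewrite ffunE intrD mulrDl. Qed.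

Lemma expo_pairN (J : finType) (a : expo J) (F : J -> R) :
  expo_pair (- a) F = - expo_pair a F.
Proof. by rewrite -sumrN; apply: eq_bigr => j _; rewrite ffunE intrN mulNr. Qed.

Lemma expo_pairMz (J : finType) (a : expo J) (n : int) (F : J -> R) :
  expo_pair (a *~ n) F = n%:~R * expo_pair a F.
Proof.
rewrite mulr_sumr; apply: eq_bigr => j _.
by rewrite ffunMzE mulrzz intrM mulrA [n%:~R * _]mulrC.
Qed.

Lemma expo_pair_evec (J : finType) (j : J) (F : J -> R) :
  expo_pair (evec j) F = F j.
Proof.
rewrite /expo_pair (bigD1 j) //= big1 => [|i /negbTE nij]; rewrite ffunE.
  by rewrite eqxx mul1r addr0.
by rewrite nij mul0r.
Qed.

Lemma expo_pairNr (J : finType) (a : expo J) (F : J -> R) :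
  expo_pair a (fun j => - F j) = - expo_pair a F.
Proof. by rewrite -sumrN; apply: eq_bigr => j _; rewrite mulrN. Qed.

Lemma expo_pairC (J : finType) (a b : expo J) (w : J -> R) :
  expo_pair a (fun j => (b j)%:~R * w j) = expo_pair b (fun j => (a j)%:~R * w j).
Proof. by apply: eq_bigr => j _; rewrite mulrCA. Qed.

Lemma expo_pair0 (J : finType) (a : expo J) : expo_pair a (fun=> 0) = 0.
Proof. by rewrite /expo_pair big1 // => j _; rewrite mulr0. Qed.

Lemma expo_pair_dirac (J : finType) (a : expo J) (p : J) (F : J -> R) :
  expo_pair a (fun q => if q == p then F q else 0) = (a p)%:~R * F p.
Proof.
rewrite /expo_pair (bigD1 p) //= eqxx big1 ?addr0 // => q /negbTE ->.
exact: mulr0.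
Qed.

Lemma expo_pair_exchange (J1 J2 : finType) (a : expo J1) (b : expo J2)
    (H : J1 -> J2 -> R) :
  expo_pair a (fun i => expo_pair b (H i)) =
  expo_pair b (fun j => expo_pair a (H^~ j)).
Proof.
rewrite /expo_pair; under eq_bigr do rewrite mulr_sumr.
rewrite exchange_big; apply: eq_bigr => j _; rewrite mulr_sumr.
by apply: eq_bigr => i _; rewrite mulrCA.
Qed.

Lemma expo_pair_pull (J J' : finType) (P : J' -> expo J) (c : expo J')
    (F : J -> R) :
  expo_pair (expo_pull P c) F = expo_pair c (fun u => expo_pair (P u) F).
Proof.
rewrite /expo_pair; under [RHS]eq_bigr do rewrite mulr_sumr.
rewrite exchange_big; apply: eq_bigr => i _.
rewrite sum_ffunE rmorph_sum /= mulr_suml; apply: eq_bigr => u _.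
by rewrite ffunMzE mulrzz intrM -mulrA mulrCA.
Qed.

Lemma expo_pullD (J J' : finType) (P : J' -> expo J) (c c' : expo J') :
  expo_pull P (c + c') = expo_pull P c + expo_pull P c'.
Proof. by rewrite -big_split; apply: eq_bigr => u _; rewrite ffunE mulrzDr. Qed.

Lemma expo_form_pull (J J' : finType) (Om : J -> J -> R) (Om' : J' -> J' -> R)
    (P : J' -> expo J) :
  (forall u v, Om' u v = expo_form Om (P u) (P v)) ->
  forall c c', expo_form Om (expo_pull P c) (expo_pull P c') = expo_form Om' c c'.
Proof.
move=> EOm' c c'; rewrite /expo_form expo_pair_pull; apply: eq_bigr => u _.
congr (_ * _); rewrite (eq_expo_pair _ (fun i => expo_pair_pull _ _ _)).
by rewrite expo_pair_exchange; apply: eq_expo_pair => v; rewrite EOm'.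
Qed.

Definition expo_inl (J1 J2 : finType) (a : expo J1) : expo (J1 + J2)%type :=
  [ffun z => if z is inl i then a i else 0].

Definition expo_inr (J1 J2 : finType) (a : expo J2) : expo (J1 + J2)%type :=
  [ffun z => if z is inr i then a i else 0].

Lemma expo_pair_inl (J1 J2 : finType) (a : expo J1) (F : (J1 + J2)%type -> R) :
  expo_pair (expo_inl J2 a) F = expo_pair a (F \o inl).
Proof.
rewrite /expo_pair big_sumType /= [X in _ + X]big1 ?addr0 => [|j _].
  by apply: eq_bigr => i _; rewrite ffunE.
by rewrite ffunE mul0r.
Qed.

Lemma expo_pair_inr (J1 J2 : finType) (a : expo J2) (F : (J1 + J2)%type -> R) :
  expo_pair (expo_inr J1 a) F = expo_pair a (F \o inr).
Proof.
rewrite /expo_pair big_sumType /= big1 ?add0r => [|i _].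
  by apply: eq_bigr => j _; rewrite ffunE.
by rewrite ffunE mul0r.
Qed.

End ExponentPairing.

Section MonomialPoissonMaps.
Variable R : comNzRingType.

Lemma pbracket_linearl (J : finType) (Om : J -> J -> R) (g : Laurent R J) :
  linear (fun f => pbracket Om f g).
Proof.
move=> c x y; rewrite /pbracket scaler_sumr -big_split; apply: eq_bigr => i _ /=.
rewrite scaler_sumr -big_split; apply: eq_bigr => j _ /=.
by rewrite euler_linear lmul_linearl scalerDr !scalerA mulrC.
Qed.

Lemma pbracket_linearr (J : finType) (Om : J -> J -> R) (f : Laurent R J) :
  linear (pbracket Om f).
Proof.
move=> c x y; rewrite /pbracket scaler_sumr -big_split; apply: eq_bigr => i _ /=.
rewrite scaler_sumr -big_split; apply: eq_bigr => j _ /=.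
by rewrite euler_linear lmul_linearr scalerDr !scalerA mulrC.
Qed.

Lemma pbracket_mono (J : finType) (Om : J -> J -> R) (a b : expo J) :
  pbracket Om (mono R a) (mono R b) = expo_form Om a b *: mono R (a + b).
Proof.
rewrite /pbracket /expo_form /expo_pair scaler_suml; apply: eq_bigr => i _.
rewrite mulr_sumr scaler_suml; apply: eq_bigr => j _.
rewrite !euler_mono (scalable_linear (lmul_linearl _)) /=.
rewrite (scalable_linear (lmul_linearr _)) /= lmul_mono !scalerA.
by congr (_ *: _); ring.
Qed.

Lemma pullback_linear (J J' : finType) (P : J' -> expo J) :
  linear (@pullback R J J' P).
Proof. exact: fglift_linear. Qed.

Lemma pullback_mono (J J' : finType) (P : J' -> expo J) (c : expo J') :
  pullback P (mono R c) = mono R (expo_pull P c).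
Proof. exact: fglift1. Qed.

Theorem poisson_map_of_congruence (J J' : finType) (Om : J -> J -> R)
    (Om' : J' -> J' -> R) (P : J' -> expo J) :
  (forall u v, Om' u v = expo_form Om (P u) (P v)) -> is_poisson_map Om Om' P.
Proof.
move=> EOm'; apply: Laurent_bilinear_ext => [g c f f'|f c g g'|g c f f'|f c g g'|a b] /=.
- by rewrite pbracket_linearl pullback_linear.
- by rewrite pbracket_linearr pullback_linear.
- by rewrite pullback_linear pbracket_linearl.
- by rewrite pullback_linear pbracket_linearr.
rewrite pbracket_mono (scalable_linear (pullback_linear P)) /= !pullback_mono.
by rewrite pbracket_mono expo_pullD (expo_form_pull EOm').
Qed.

End MonomialPoissonMaps.

(* The sign-coherent form of the mutation rule, free of the case split on the sign
   of eps_ik eps_kj. *)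
Lemma mutateE_neqk (I : finType) (eps : I -> I -> int) (k i j : I) :
  i != k -> j != k ->
  mutate eps k i j =
    eps i j + pos_part (eps i k) * eps k j + eps i k * pos_part (- eps k j).
Proof.
move=> /negbTE nik /negbTE njk; rewrite /mutate nik njk /=.
by rewrite /pos_part; case: ifP => heps; nia.
Qed.

Lemma epshat_mutate_eqk (R : numFieldType) (I : finType) (eps : I -> I -> int)
    (d : I -> nat) (k i j : I) :
  (i == k) || (j == k) -> epshat R (mutate eps k) d i j = - epshat R eps d i j.
Proof. by rewrite /epshat /mutate => ->; rewrite intrN mulNr. Qed.

Section FeedMutation.
Variables (R : numFieldType) (I : finType) (eps : I -> I -> int) (d : I -> nat).
Hypothesis feed : is_feed R eps d.

Local Notation ehat := (epshat R eps d).

Lemma feed_d_gt0 i : 0 < (d i)%:R :> R.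
Proof. by rewrite ltr0n; case: feed. Qed.

Lemma epshat_skew i j : ehat j i = - ehat i j.
Proof. by case: feed => _ ->. Qed.

Lemma epshat_diag i : ehat i i = 0.
Proof.
apply/eqP; have /eqP := epshat_skew i i.
by rewrite -addr_eq0 -mulr2n mulrn_eq0.
Qed.

Lemma eps_diag i : eps i i = 0.
Proof.
apply/eqP; have /eqP := epshat_diag i.
by rewrite mulf_eq0 invr_eq0 intr_eq0 (gt_eqF (feed_d_gt0 i)) orbF.
Qed.

Lemma feed_sign i j : (0 < eps i j) = (eps j i < 0).
Proof.
have skew_int : (eps j i)%:~R = - (eps i j)%:~R * ((d i)%:R / (d j)%:R) :> R.
  have di_neq0 := lt0r_neq0 (feed_d_gt0 i).
  rewrite -(divfK di_neq0 (eps j i)%:~R).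
  by move: (epshat_skew i j); rewrite /epshat => ->; ring.
rewrite -(ltr0z R) -(ltrz0 R) skew_int pmulr_llt0 ?oppr_lt0 //.
by rewrite divr_gt0 ?feed_d_gt0.
Qed.

Lemma pos_part_skew i j :
  (pos_part (eps i j))%:~R / (d j)%:R = (pos_part (- eps j i))%:~R / (d i)%:R :> R.
Proof.
rewrite /pos_part; case: (ltP 0 (eps i j)) => hij.
  have hji : eps j i < 0 by rewrite -feed_sign.
  rewrite !max_l ?oppr_ge0 ?ltW // intrN mulNr.
  exact: epshat_skew.
have hji : 0 <= eps j i by rewrite leNgt -feed_sign -leNgt.
by rewrite !max_r ?oppr_le0 // !mul0r.
Qed.

Variable k : I.

Lemma epshat_mutate i j : i != k -> j != k ->
  epshat R (mutate eps k) d i j =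
  ehat i j + (pos_part (eps i k))%:~R * ehat k j + (pos_part (eps j k))%:~R * ehat i k.
Proof.
move=> nik njk; rewrite /epshat mutateE_neqk // !(intrD, intrM) !mulrDl.
by rewrite [X in _ = _ + X]mulrCA pos_part_skew; ring.
Qed.

Lemma expo_pair_muX i (F : I -> R) :
  expo_pair (muX eps k i) F =
  if i == k then - F k else F i + (pos_part (eps i k))%:~R * F k.
Proof.
rewrite /muX; case: eqP => _.
  by rewrite expo_pairN expo_pair_evec.
by rewrite expo_pairD expo_pairMz !expo_pair_evec.
Qed.

Lemma muX_congruence i j :
  OmX R (mutate eps k) d i j = expo_form (OmX R eps d) (muX eps k i) (muX eps k j).
Proof.
rewrite /expo_form (eq_expo_pair _ (fun p => expo_pair_muX j _)) expo_pair_muX /OmX.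
have [->|nik] := eqVneq i k; have [->|njk] := eqVneq j k.
- by rewrite epshat_mutate_eqk ?eqxx // epshat_diag !oppr0.
- by rewrite epshat_mutate_eqk ?eqxx // epshat_diag mulr0 addr0.
- by rewrite epshat_mutate_eqk ?eqxx ?orbT // epshat_diag oppr0 mulr0 addr0.
- by rewrite epshat_mutate // epshat_diag mulr0 addr0; ring.
Qed.

Definition muB (i : I) : expo I :=
  if i == k then [ffun j => pos_part (- eps k j)] - evec k else evec i.

Lemma muD_inl i : muD eps k (inl i) = expo_inl I (muB i).
Proof.
apply/ffunP => -[j|j]; rewrite /muD /muB !ffunE; case: eqP => _; rewrite !ffunE //=.
by congr (_ - _); rewrite /pos_part; case: ifP => heps; lia.
Qed.

Lemma muD_inr i : muD eps k (inr i) = expo_inr I (muX eps k i).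
Proof.
apply/ffunP => -[j|j]; rewrite /muD /muX !ffunE;
  by case: eqP => _; rewrite !(ffunMzE, ffunE) /= ?mul0rz ?add0r.
Qed.

Lemma muX_muB_dual i j :
  expo_pair (muX eps k i) (fun p => (muB j p)%:~R / (d p)%:R) =
  if i == j then (d i)%:R^-1 else 0 :> R.
Proof.
have pos_part0 : pos_part 0 = 0 by [].
rewrite expo_pair_muX /muB.
have [->|nik] := eqVneq i k; have [Ejk|njk] := eqVneq j k;
  rewrite ?Ejk !ffunE /= ?eps_diag ?oppr0 ?pos_part0 ?eqxx ?[k == _]eq_sym
    ?(negbTE nik) ?(negbTE njk).
- by rewrite sub0r intrN mulNr opprK mul1r.
- by rewrite mul0r oppr0.
- by rewrite addr0 -(pos_part_skew i k) sub0r intrN mulNr mul1r mulrN subrr.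
- by case: (i == j); rewrite ?mul1r ?mul0r mulr0 addr0.
Qed.

Lemma muD_congruence u v :
  OmD R (mutate eps k) d u v = expo_form (OmD R eps d) (muD eps k u) (muD eps k v).
Proof.
rewrite /expo_form; case: u => i; case: v => j; rewrite ?muD_inl ?muD_inr.
all: under eq_expo_pair do rewrite ?expo_pair_inl ?expo_pair_inr.
all: rewrite ?expo_pair_inl ?expo_pair_inr /=.
- rewrite (eq_expo_pair _ (G := fun=> 0)) ?expo_pair0 // => p.
  exact: expo_pair0.
- rewrite (eq_expo_pair _ (G := fun p => - ((muX eps k j p)%:~R * (d p)%:R^-1))).
    by rewrite expo_pairNr expo_pairC muX_muB_dual; case: (j == i); rewrite ?oppr0.
  by move=> p; rewrite -mulrN; exact: expo_pair_dirac.
- rewrite (eq_expo_pair _ (G := fun p => (muB j p)%:~R * (d p)%:R^-1)) ?muX_muB_dual //.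
  move=> p; rewrite -(expo_pair_dirac _ _ (fun=> (d p)%:R^-1)).
  by apply: eq_expo_pair => q /=; rewrite eq_sym.
- exact: muX_congruence.
Qed.

Theorem mutation_poisson_X :
  is_poisson_map (OmX R eps d) (OmX R (mutate eps k) d) (muX eps k).
Proof. exact: poisson_map_of_congruence muX_congruence. Qed.

Theorem mutation_poisson_D :
  is_poisson_map (OmD R eps d) (OmD R (mutate eps k) d) (muD eps k).
Proof. exact: poisson_map_of_congruence muD_congruence. Qed.

End FeedMutation.

Theorem corollary2p9 (R : numFieldType) (I : finType) (eps : I -> I -> int)
    (d : I -> nat) (k : I) :
  is_feed R eps d ->
  is_poisson_map (OmD R eps d) (OmD R (mutate eps k) d) (muD eps k) /\
  is_poisson_map (OmX R eps d) (OmX R (mutate eps k) d) (muX eps k).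
Proof.
by move=> feed; split; [exact: mutation_poisson_D | exact: mutation_poisson_X].
Qed.
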